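(* Let $u$ be a finite game with player set $\mathcal V$ and strategy profile space $\mathcal X$, let $\mathcal R\subseteq\mathcal V$ be nonempty and $\mathcal S=\mathcal V\setminus\mathcal R$. Let $y^*\in\mathcal X_{\mathcal R}$ be a Nash equilibrium of the averaged game $\bar u\in\mathcal U_{\mathcal R}$. If $$\chi^{\bar u}_i(y^* )\ge 2\|u_i-\bar u_i\|_\infty\qquad\text{for all } i\in\mathcal R,$$ then $y^*$ is a Nash equilibrium of the game $u^{(z)}\in\mathcal U_{\mathcal R}$ for every $z\in\mathcal X_{\mathcal S}$.
   Context: A finite game consists of a finite nonempty player set $\mathcal V$, finite nonempty action sets $\mathcal A_i$, profile space $\mathcal X=\prod_{i\in\mathcal V}\mathcal A_i$, and utilities $u_i:\mathcal X\to\mathbb R$. Profiles $x,y$ are $i$-comparable, $x\sim_i y$, if they coincide except possibly in entry $i$; for a game $v$ define $\chi^v_i(x)=\min_{y\sim_i x,\,y\neq x}\{v_i(x)-v_i(y)\}$, and a (pure strategy) Nash equilibrium of $v$ is a profile $x^*$ with $\chi^v_i(x^* )\ge0$ for every player $i$. For $\mathcal R\subseteq\mathcal V$ nonempty and $\mathcal S=\mathcal V\setminus\mathcal R$, write $\mathcal X_{\mathcal R}=\prod_{i\in\mathcal R}\mathcal A_i$, $\mathcal X_{\mathcal S}=\prod_{i\in\mathcal S}\mathcal A_i$, identify $\mathcal X$ with $\mathcal X_{\mathcal R}\times\mathcal X_{\mathcal S}$, writing $x=(x_{\mathcal R},x_{\mathcal S})$, and let $\mathcal U_{\mathcal R}$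 be the set of games with player set $\mathcal R$ and profile space $\mathcal X_{\mathcal R}$. For $z\in\mathcal X_{\mathcal S}$ the game $u^{(z)}\in\mathcal U_{\mathcal R}$ has utilities $u^{(z)}_i(y)=u_i(y,z)$ for $i\in\mathcal R$, $y\in\mathcal X_{\mathcal R}$. The averaged game $\bar u\in\mathcal U_{\mathcal R}$ has utilities $\bar u_i(y)=\frac1{|\mathcal X_{\mathcal S}|}\sum_{z\in\mathcal X_{\mathcal S}}u_i(y,z)$ for $i\in\mathcal R$. For $i\in\mathcal R$, $\|u_i-\bar u_i\|_\infty=\max_{x\in\mathcal X}|u_i(x)-\bar u_i(x_{\mathcal R})|$. *)

From HB Require Import structures.
From mathcomp Require Import all_boot all_order all_algebra.
From mathcomp Require Import reals constructive_ereal.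
Set Implicit Arguments. Unset Strict Implicit. Unset Printing Implicit Defensive.
Import Order.TTheory GRing.Theory Num.Theory.
Local Open Scope ring_scope.
Local Open Scope ereal_scope.

Definition prof (I : finType) (A : I -> finType) := {dffun forall i : I, A i}.

Definition icomp (I : finType) (A : I -> finType) (i : I) (x y : prof A) : bool :=
  [forall j : I, (j != i) ==> (x j == y j)].

(* chi^v_i(x) = min over y ~_i x, y <> x of v_i(x) - v_i(y);
   the min over an empty set is +oo. *)
Definition chi (R : realFieldType) (I : finType) (A : I -> finType)
    (v : I -> prof A -> R) (i : I) (x : prof A) : \bar R :=
  \big[Order.min/+oo]_(y : prof A | icomp i y x && (y != x)) ((v i x - v i y)%R)%:E.

Definition is_nash (R : realFieldType) (I : finType) (A : I -> finType)
    (v : I -> prof A -> R) (x : prof A) : Prop :=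
  forall i : I, 0 <= chi v i x.

Section Split.
Variables (V : finType) (A : V -> finType) (Rs : {set V}).

Definition RT := {i : V | i \in Rs}.
Definition ST := {i : V | i \notin Rs}.
Definition AR (j : RT) : finType := A (val j).
Definition AS (j : ST) : finType := A (val j).

Definition join (y : prof AR) (z : prof AS) : prof A :=
  finfun (fun i : V => match boolP (i \in Rs) with
                       | AltTrue h => y (exist _ i h)
                       | AltFalse h => z (exist _ i h)
                       end).

Definition projR (x : prof A) : prof AR := finfun (fun j : RT => x (val j)).

Variable R : realFieldType.
Variable u : V -> prof A -> R.

Definition ufix (z : prof AS) : RT -> prof AR -> R :=
  fun i y => u (val i) (join y z).

Definition ubar : RT -> prof AR -> R :=
  fun i y => ((\sum_(z : prof AS) u (val i) (join y z)) / #|{: prof AS}|%:R)%R.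

Definition supdist (i : RT) : R :=
  (\big[Num.max/0]_(x : prof A) `|u (val i) x - ubar i (projR x)|)%R.

End Split.

From HB Require Import structures.
From mathcomp Require Import all_boot all_order all_algebra.
From mathcomp Require Import reals constructive_ereal.
From mathcomp Require Import lra.
Set Implicit Arguments. Unset Strict Implicit. Unset Printing Implicit Defensive.
Import Order.TTheory GRing.Theory Num.Theory.
Local Open Scope ring_scope.

(* Every game u^(z) is within sup-distance d = ||u_i - ubar_i|| of the averaged game for
   player i, and a deviation gap of 2d cannot be closed by such a perturbation: if
   |v_i - w_i| <= d and w_i(x) - w_i(y) >= 2d then v_i(y) <= w_i(y) + d <= w_i(x) - d <= v_i(x). *)

Lemma chi_ge0_of_close (R : realFieldType) (I : finType) (A : I -> finType)
    (v w : I -> prof A -> R) (i : I) (x : prof A) (d : R) :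
  (forall y, `|v i y - w i y| <= d) ->
  ((2 * d)%:E <= chi w i x)%E -> (0 <= chi v i x)%E.
Proof.
rewrite /chi => close /bigmin_geP[_ gap].
apply/bigmin_geP; split=> [|y dev_y]; first exact: leey.
have := gap y dev_y; rewrite !lee_fin subr_ge0.
have := close x; have := close y; rewrite !ler_norml => /andP[? ?] /andP[? ?].
lra.
Qed.

Lemma projR_join (V : finType) (A : V -> finType) (Rs : {set V})
    (y : prof (@AR _ A Rs)) (z : prof (@AS _ A Rs)) :
  projR Rs (join y z) = y.
Proof.
apply/ffunP=> -[j j_in]; rewrite !ffunE /=.
destruct (boolP (j \in Rs)) as [j_in'|j_out]; last by exfalso; move: (j_out); rewrite j_in.
by rewrite (bool_irrelevance j_in' j_in).
Qed.

Lemma ufix_ubar_close (R : realFieldType) (V : finType) (A : V -> finType)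
    (u : V -> prof A -> R) (Rs : {set V}) (z : prof (@AS _ A Rs)) (i : RT Rs)
    (y : prof (@AR _ A Rs)) :
  `|ufix u z i y - ubar u i y| <= supdist u i.
Proof.
have := le_bigmax 0 (fun x => `|u (val i) x - ubar u i (projR Rs x)|) (join y z).
by rewrite /= projR_join.
Qed.

Theorem proposition2 (R : realFieldType) (V : finType) (A : V -> finType)
    (hA : forall i : V, (0 < #|A i|)%N)
    (u : V -> prof A -> R) (Rs : {set V}) (hRs : Rs != set0)
    (ystar : prof (@AR _ A Rs))
    (hNE : is_nash (ubar u) ystar)
    (hchi : forall i : RT Rs, ((2 * supdist u i)%:E <= chi (ubar u) i ystar)%E) :
  forall z : prof (@AS _ A Rs), is_nash (ufix u z) ystar.
Proof.
move=> z i.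
exact: chi_ge0_of_close (ufix_ubar_close u z i) (hchi i).
Qed.
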